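(* Let $P=(p_1,\dots,p_n)$ be points in $\mathbb{R}^d$, $\mathcal{F}$ a constraint for $k$-CMedian, and $\mathcal{C}=\{c_1,\dots,c_k\}\subset\mathbb{R}^d$ with $\omega=\frac1n\sum_{i=1}^n\min_{c\in\mathcal{C}}\|p_i-c\|$. For each $i$ let $\tilde p_i$ be a point of $\mathcal{C}$ nearest to $p_i$, and $\tilde P=(\tilde p_1,\dots,\tilde p_n)$. If $\mu_{opt}$ and $\tilde\mu_{opt}$ denote the optimal $k$-CMedian values of $P$ and $\tilde P$ (same $\mathcal{F}$), then $\tilde\mu_{opt}\le\omega+\mu_{opt}$.
   Context: A constraint for $k$-CMedian is a nonempty family $\mathcal{F}$ of ordered partitions $(S_1,\dots,S_k)$ of $\{1,\dots,n\}$ into $k$ parts. For a sequence $X=(x_1,\dots,x_n)$ its optimal $k$-CMedian value is $\min_{(S_j)\in\mathcal{F}}\min_{c'_1,\dots,c'_k\in\mathbb{R}^d}\frac1n\sum_j\sum_{i\in S_j}\|x_i-c'_j\|$. *)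

From HB Require Import structures.
From mathcomp Require Import all_boot all_order all_algebra.
From mathcomp Require Import boolp classical_sets reals.
Set Implicit Arguments. Unset Strict Implicit. Unset Printing Implicit Defensive.
Import Order.TTheory GRing.Theory Num.Theory.
Local Open Scope ring_scope.

Definition enorm (R : realType) (d : nat) (v : 'rV[R]_d) : R :=
  Num.sqrt (\sum_(j < d) (v ord0 j) ^+ 2).

(* An ordered partition (S_1,...,S_k) of {1..n} is encoded by its labelling
   function sigma : 'I_n -> 'I_k  (S_j = sigma^{-1}(j)).
   A constraint is a nonempty family F of such labellings. *)

Definition ccost (R : realType) (d n k : nat) (X : 'I_n -> 'rV[R]_d)
  (sigma : {ffun 'I_n -> 'I_k}) (c' : 'I_k -> 'rV[R]_d) : R :=
  n%:R^-1 * \sum_(i < n) enorm (X i - c' (sigma i)).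

Definition cmedian_opt (R : realType) (d n k : nat)
  (F : {set {ffun 'I_n -> 'I_k}}) (X : 'I_n -> 'rV[R]_d) : R :=
  reals.inf [set r : R | exists sigma c',
      sigma \in F /\ r = ccost X sigma c']%classic.

Definition dist_to (R : realType) (d k : nat) (c : 'I_k -> 'rV[R]_d)
  (x : 'rV[R]_d) : R :=
  reals.inf [set r : R | exists j, r = enorm (x - c j)]%classic.

From HB Require Import structures.
From mathcomp Require Import all_boot all_order all_algebra.
From mathcomp Require Import classical_sets reals.
From mathcomp Require Import ring.
Import Order.TTheory GRing.Theory Num.Theory.
Local Open Scope ring_scope.

(* Moving every point p_i to its nearest centre moves it by dist(p_i, C), so
   for any clustering the cost of P~ exceeds that of P by at most the average
   displacement omega (triangle inequality, term by term); taking infima over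
   the admissible clusterings gives the bound. *)

Lemma CauchySchwarz_sum (R : realDomainType) (I : finType) (a b : I -> R) :
  (\sum_i a i * b i) ^+ 2 <= (\sum_i a i ^+ 2) * (\sum_i b i ^+ 2).
Proof.
pose f i j := a i ^+ 2 * b j ^+ 2 - a i * b i * (a j * b j).
have lagrange : \sum_i \sum_j (a i * b j - a j * b i) ^+ 2 =
    ((\sum_i a i ^+ 2) * (\sum_i b i ^+ 2) - (\sum_i a i * b i) ^+ 2) *+ 2.
  have -> : \sum_i \sum_j (a i * b j - a j * b i) ^+ 2 =
      \sum_i \sum_j f i j + \sum_i \sum_j f j i.
    rewrite -big_split; apply: eq_bigr => i _; rewrite -big_split /=.
    by apply: eq_bigr => j _; rewrite /f; ring.
  rewrite [X in _ + X]exchange_big mulr2n expr2 !big_distrlr /=.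
  by congr (_ + _); rewrite -!sumrB; apply: eq_bigr => i _; rewrite -sumrB.
rewrite -subr_ge0 -(pmulrn_lge0 _ (isT : (0 < 2)%N)) -lagrange.
by do 2!apply: sumr_ge0 => ? _; exact: sqr_ge0.
Qed.

Section EuclideanNorm.
Variables (R : realType) (d : nat).
Implicit Types u v : 'rV[R]_d.

Lemma enorm_ge0 v : 0 <= enorm v.
Proof. exact: sqrtr_ge0. Qed.

Lemma enormN v : enorm (- v) = enorm v.
Proof. by rewrite /enorm; congr Num.sqrt; apply: eq_bigr => j _; rewrite mxE sqrrN. Qed.

Lemma ler_enormD u v : enorm (u + v) <= enorm u + enorm v.
Proof.
set A := \sum_j u ord0 j ^+ 2; set B := \sum_j v ord0 j ^+ 2.
set C := \sum_j u ord0 j * v ord0 j.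
have A0 : 0 <= A by apply: sumr_ge0 => j _; exact: sqr_ge0.
have B0 : 0 <= B by apply: sumr_ge0 => j _; exact: sqr_ge0.
have normD2 : \sum_j (u + v) ord0 j ^+ 2 = A + C *+ 2 + B.
  rewrite /A /B /C -mulr_natr mulr_suml -!big_split /=.
  by apply: eq_bigr => j _; rewrite mxE; ring.
have C_le : C <= Num.sqrt A * Num.sqrt B.
  rewrite -sqrtrM // (le_trans (real_ler_norm (num_real C))) //.
  by rewrite -sqrtr_sqr ler_sqrt ?mulr_ge0 // CauchySchwarz_sum.
rewrite -(ler_pXn2r (isT : (0 < 2)%N)) ?nnegrE ?addr_ge0 ?enorm_ge0 //.
rewrite /enorm -/A -/B sqr_sqrtr normD2; last first.
  by rewrite -normD2 sumr_ge0 // => j _; exact: sqr_ge0.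
by rewrite sqrrD !sqr_sqrtr // lerD2r lerD2l lerMn2r.
Qed.

Lemma enorm_distD u v w : enorm (v - w) <= enorm (u - v) + enorm (u - w).
Proof.
have -> : v - w = (v - u) + (u - w) by rewrite addrA subrK.
by rewrite -(enormN (u - v)) opprB ler_enormD.
Qed.

End EuclideanNorm.

Lemma inf_attained (R : realType) (E : set R) x :
  E x -> lbound E x -> inf E = x.
Proof.
move=> Ex lbx; apply/eqP; rewrite eq_le lb_le_inf ?andbT //; last by exists x.
by apply: ge_inf => //; exists x.
Qed.

Lemma dist_to_nearest {R : realType} {d k : nat} (c : 'I_k -> 'rV[R]_d) x j :
  (forall j', enorm (x - c j) <= enorm (x - c j')) -> dist_to c x = enorm (x - c j).
Proof. by move=> nearest; apply: inf_attained => [|_ [j' ->]]; [exists j|]. Qed.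

Section ConstrainedMedian.
Variables (R : realType) (d n k : nat) (F : {set {ffun 'I_n -> 'I_k}}).
Implicit Types (X Y : 'I_n -> 'rV[R]_d) (sigma : {ffun 'I_n -> 'I_k}).
Implicit Types cs : 'I_k -> 'rV[R]_d.

Lemma ccost_ge0 X sigma cs : 0 <= ccost X sigma cs.
Proof. by rewrite mulr_ge0 ?invr_ge0 // sumr_ge0 // => i _; exact: enorm_ge0. Qed.

Lemma cmedian_opt_le X sigma cs : sigma \in F -> cmedian_opt F X <= ccost X sigma cs.
Proof.
move=> sF; apply: ge_inf; last by exists sigma, cs.
by exists 0 => _ [? [? [_ ->]]]; exact: ccost_ge0.
Qed.

Lemma cmedian_opt_ge X r : F != finset.set0 ->
  (forall sigma cs, sigma \in F -> r <= ccost X sigma cs) -> r <= cmedian_opt F X.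
Proof.
case/set0Pn=> sigma0 s0F r_le; apply: lb_le_inf.
  by exists (ccost X sigma0 (fun=> 0)), sigma0, (fun=> 0).
by move=> _ [sigma [cs [sF ->]]]; exact: r_le.
Qed.

Lemma ccost_displace X Y sigma cs :
  ccost Y sigma cs <= n%:R^-1 * \sum_i enorm (X i - Y i) + ccost X sigma cs.
Proof.
rewrite /ccost -mulrDr ler_wpM2l ?invr_ge0 // -big_split ler_sum // => i _.
exact: enorm_distD.
Qed.

Lemma cmedian_opt_displace X Y : F != finset.set0 ->
  cmedian_opt F Y <= n%:R^-1 * \sum_i enorm (X i - Y i) + cmedian_opt F X.
Proof.
move=> F0; rewrite -lerBlDl; apply: cmedian_opt_ge => // sigma cs sF.
by rewrite lerBlDl (le_trans (cmedian_opt_le Y sigma cs sF)) ?ccost_displace.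
Qed.

End ConstrainedMedian.

Theorem lemma12 (R : realType) (d n k : nat)
  (P : 'I_n -> 'rV[R]_d) (F : {set {ffun 'I_n -> 'I_k}})
  (c : 'I_k -> 'rV[R]_d) (Ptilde : 'I_n -> 'rV[R]_d) :
  F != finset.set0 ->
  (forall i, exists j, Ptilde i = c j) ->
  (forall i j, enorm (P i - Ptilde i) <= enorm (P i - c j)) ->
  cmedian_opt F Ptilde <=
    n%:R^-1 * \sum_(i < n) dist_to c (P i) + cmedian_opt F P.
Proof.
move=> F0 Ptilde_centre Ptilde_nearest.
suff -> : \sum_i dist_to c (P i) = \sum_i enorm (P i - Ptilde i).
  exact: cmedian_opt_displace.
apply: eq_bigr => i _; have [j Ptilde_i] := Ptilde_centre i.
rewrite Ptilde_i (dist_to_nearest c (P i) j) // => j'.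
by rewrite -Ptilde_i; exact: Ptilde_nearest.
Qed.
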